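(* A perfect Euler cuboid exists if and only if there exist integers $a,b,c,u$ with $c>0$, $0<u/c<1$ and $(a/c,\,b/c)\in D_{ab}$ satisfying the homogeneous Diophantine equation of degree $12$ $$\begin{aligned}&u^4a^4b^4+6a^4u^2b^4c^2-2u^4a^4b^2c^2-2u^4a^2b^4c^2+4u^2b^4a^2c^4+4a^4u^2b^2c^4-12u^4a^2b^2c^4\\&+u^4a^4c^4+u^4b^4c^4+a^4b^4c^4+6a^4u^2c^6+6u^2b^4c^6-8a^2b^2u^2c^6-2u^4a^2c^6-2u^4b^2c^6\\&-2a^4b^2c^6-2b^4a^2c^6+u^4c^8+b^4c^8+a^4c^8+4a^2u^2c^8+4b^2u^2c^8-12b^2a^2c^8\\&+6u^2c^{10}-2a^2c^{10}-2b^2c^{10}+c^{12}=0.\end{aligned}$$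
   Context: An Euler cuboid is a rectangular parallelepiped whose three edge lengths and three face diagonal lengths are all positive integers; a perfect Euler cuboid is an Euler cuboid whose space diagonal also has integer length, i.e. a $7$-tuple of positive integers $(a,b,c,\alpha,\beta,\gamma,d)$ with $a^2+b^2=\gamma^2$, $b^2+c^2=\alpha^2$, $c^2+a^2=\beta^2$, $a^2+b^2+c^2=d^2$ (these letters are unrelated to the integer unknowns $a,b,c,u$ of the claim). Let $D_{uz}=\{(u,z)\in\mathbb{R}^2: 0<u<1,\ 0<z<1\}$. Define $f\colon D_{uz}\to\mathbb{R}^2$ by $f(u,z)=(a(u,z),b(u,z))$, where $a(u,z)$ and $b(u,z)$ are the positive real numbers determined by $$a^2=\frac{u^2+z^2}{u^2z^2+1},\qquad b^2=\frac{(1+u^2)(1+z^2)-2z(1-u^2)}{(1+u^2)(1+z^2)+2z(1-u^2)}$$ (both right-hand sides are positive on $D_{uz}$), and let $D_{ab}=f(D_{uz})$. *)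

From Stdlib Require Import Reals ZArith Lra Lia.
Open Scope R_scope.

Definition perfect_euler_cuboid (a b c al be ga d : Z) : Prop :=
  (0 < a)%Z /\ (0 < b)%Z /\ (0 < c)%Z /\ (0 < al)%Z /\ (0 < be)%Z /\
  (0 < ga)%Z /\ (0 < d)%Z /\
  (a*a + b*b = ga*ga)%Z /\ (b*b + c*c = al*al)%Z /\
  (c*c + a*a = be*be)%Z /\ (a*a + b*b + c*c = d*d)%Z.

Definition perfect_euler_cuboid_exists : Prop :=
  exists a b c al be ga d : Z, perfect_euler_cuboid a b c al be ga d.

(* the map f : D_uz -> R^2, components are the positive square roots *)
Definition fa (u z : R) : R := sqrt ((u^2 + z^2) / (u^2 * z^2 + 1)).
Definition fb (u z : R) : R :=
  sqrt (((1 + u^2) * (1 + z^2) - 2 * z * (1 - u^2)) /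
        ((1 + u^2) * (1 + z^2) + 2 * z * (1 - u^2))).

Definition in_Duz (u z : R) : Prop := 0 < u < 1 /\ 0 < z < 1.

Definition in_Dab (x y : R) : Prop :=
  exists u z : R, in_Duz u z /\ x = fa u z /\ y = fb u z.

Open Scope Z_scope.
Definition P12 (a b c u : Z) : Z :=
  u^4*a^4*b^4 + 6*a^4*u^2*b^4*c^2 - 2*u^4*a^4*b^2*c^2 - 2*u^4*a^2*b^4*c^2
  + 4*u^2*b^4*a^2*c^4 + 4*a^4*u^2*b^2*c^4 - 12*u^4*a^2*b^2*c^4
  + u^4*a^4*c^4 + u^4*b^4*c^4 + a^4*b^4*c^4 + 6*a^4*u^2*c^6 + 6*u^2*b^4*c^6
  - 8*a^2*b^2*u^2*c^6 - 2*u^4*a^2*c^6 - 2*u^4*b^2*c^6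
  - 2*a^4*b^2*c^6 - 2*b^4*a^2*c^6 + u^4*c^8 + b^4*c^8 + a^4*c^8
  + 4*a^2*u^2*c^8 + 4*b^2*u^2*c^8 - 12*b^2*a^2*c^8
  + 6*u^2*c^10 - 2*a^2*c^10 - 2*b^2*c^10 + c^12.
Close Scope Z_scope.

(* The rational points of the unit circle are (cos, sin) = ((1 - t^2)/(1 + t^2),
   2 t/(1 + t^2)), t the tangent of the half angle.  Up to the positive factor
   c^12 (1 + a'^2)^2 (1 + b'^2)^2 (1 + u'^2)^2, with a' = a/c, b' = b/c, u' = u/c,
   P12 a b c u is cos^2 α + cos^2 β - cos^2 υ for the angles α, β, υ of half-angle
   tangents a', b', u'.  For a perfect cuboid with edges x1, x2, x3, face diagonal
   g over (x1, x2) and space diagonal d, the angles with cosines x1/d, x2/d, g/d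
   satisfy cos^2 α + cos^2 β = cos^2 υ; conversely, clearing denominators in the
   half-angle parametrization turns a root of P12 into such a cuboid.  The map f
   describes the admissible (a', b'): if u and z are the half-angle tangents of the
   angles (g, d) and (x1, g), then cos α = cos(g, d) cos(x1, g) and
   cos β = cos(g, d) sin(x1, g), and tan(φ/2) = sqrt((1 - cos φ)/(1 + cos φ)). *)

From Stdlib Require Import Reals ZArith Lra Lia.
Open Scope R_scope.

Definition cos_tan_half (t : R) : R := (1 - t^2) / (1 + t^2).
Definition sin_tan_half (t : R) : R := 2 * t / (1 + t^2).

Lemma Rdiv_in_01 x y : 0 < x -> x < y -> 0 < x / y < 1.
Proof.
  intros Hx Hxy; split; [apply Rdiv_lt_0_compat; lra|].
  apply Rmult_lt_reg_r with y; [lra|].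
  unfold Rdiv; rewrite Rmult_assoc, Rinv_l by lra; lra.
Qed.

Lemma sqrt_in_01 q : 0 < q < 1 -> 0 < sqrt q < 1.
Proof.
  intros Hq; split; [apply sqrt_lt_R0; lra|].
  rewrite <- sqrt_1; apply sqrt_lt_1_alt; lra.
Qed.

Lemma sqrt_ratio_in_01 w : 0 < w < 1 -> 0 < sqrt ((1 - w) / (1 + w)) < 1.
Proof. intros Hw; apply sqrt_in_01, Rdiv_in_01; lra. Qed.

Lemma cos_tan_half_in_01 t : 0 < t < 1 -> 0 < cos_tan_half t < 1.
Proof. intros Ht; apply Rdiv_in_01; nra. Qed.

Lemma sin_tan_half_in_01 t : 0 < t < 1 -> 0 < sin_tan_half t < 1.
Proof. intros Ht; apply Rdiv_in_01; nra. Qed.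

Lemma fa_tan_half u z :
  fa u z = sqrt ((1 - cos_tan_half u * cos_tan_half z) /
                 (1 + cos_tan_half u * cos_tan_half z)).
Proof.
  unfold fa, cos_tan_half; f_equal.
  assert (0 < 1 + u^2) by nra; assert (0 < 1 + z^2) by nra.
  field; repeat split; nra.
Qed.

Lemma fb_tan_half u z : 0 < z ->
  fb u z = sqrt ((1 - cos_tan_half u * sin_tan_half z) /
                 (1 + cos_tan_half u * sin_tan_half z)).
Proof.
  intros Hz; unfold fb, cos_tan_half, sin_tan_half; f_equal.
  assert (0 < 1 + u^2) by nra; assert (0 < 1 + z^2) by nra.
  assert (0 < (1 + u^2) * (1 + z^2) + (1 - u^2) * (2 * z)).
  { replace ((1 + u^2) * (1 + z^2) + (1 - u^2) * (2 * z))
      with ((1 + z)^2 + u^2 * (1 - z)^2) by ring.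
    apply Rplus_lt_le_0_compat; [nra | apply Rmult_le_pos; apply pow2_ge_0]. }
  field; repeat split; lra.
Qed.

Lemma fa_in_01 u z : in_Duz u z -> 0 < fa u z < 1.
Proof.
  intros [Hu Hz]; rewrite fa_tan_half; apply sqrt_ratio_in_01.
  pose proof (cos_tan_half_in_01 u Hu); pose proof (cos_tan_half_in_01 z Hz); nra.
Qed.

Lemma fb_in_01 u z : in_Duz u z -> 0 < fb u z < 1.
Proof.
  intros [Hu Hz]; rewrite fb_tan_half by lra; apply sqrt_ratio_in_01.
  pose proof (cos_tan_half_in_01 u Hu); pose proof (sin_tan_half_in_01 z Hz); nra.
Qed.

Lemma tan_half_sq q p t : q^2 + p^2 = t^2 -> 0 < t + p -> (q / (t + p))^2 = (t - p) / (t + p).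
Proof.
  intros Hqpt Htp; unfold Rdiv; rewrite Rpow_mult_distr.
  replace (q^2) with ((t - p) * (t + p)) by nra; field; lra.
Qed.

Lemma cos_tan_half_angle q p t : q^2 + p^2 = t^2 -> 0 < t -> 0 < t + p ->
  cos_tan_half (q / (t + p)) = p / t.
Proof.
  intros Hqpt Ht Htp; unfold cos_tan_half; rewrite (tan_half_sq q p t) by lra.
  field; lra.
Qed.

Lemma sin_tan_half_angle q p t : q^2 + p^2 = t^2 -> 0 < t -> 0 < t + p ->
  sin_tan_half (q / (t + p)) = q / t.
Proof.
  intros Hqpt Ht Htp; unfold sin_tan_half; rewrite (tan_half_sq q p t) by lra.
  field; lra.
Qed.

Lemma sqrt_ratio_leg p d s : 0 < d -> 0 < s -> s^2 + p^2 = d^2 ->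
  sqrt ((1 - p / d) / (1 + p / d)) = (d - p) / s.
Proof.
  intros Hd Hs Hspd.
  assert (Hpd : - d < p < d) by nra.
  rewrite <- (sqrt_pow2 ((d - p) / s)) by (apply Rlt_le, Rdiv_lt_0_compat; lra).
  f_equal.
  replace (((d - p) / s)^2) with ((d - p)^2 / (d^2 - p^2)) by (rewrite <- Hspd; field; split; nra).
  field; repeat split; nra.
Qed.

Lemma cuboid_tan_half_angles x1 x2 x3 g d al be :
  0 < x1 -> 0 < x2 -> 0 < x3 -> 0 < g -> 0 < d -> 0 < al -> 0 < be ->
  x1^2 + x2^2 = g^2 -> x3^2 + g^2 = d^2 -> al^2 + x1^2 = d^2 -> be^2 + x2^2 = d^2 ->
  in_Duz (x3 / (d + g)) (x2 / (g + x1)) /\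
  fa (x3 / (d + g)) (x2 / (g + x1)) = (d - x1) / al /\
  fb (x3 / (d + g)) (x2 / (g + x1)) = (d - x2) / be.
Proof.
  intros P1 P2 P3 Pg Pd Pal Pbe Hg Hd Hal Hbe.
  assert (Hu : 0 < x3 / (d + g) < 1) by (apply Rdiv_in_01; nra).
  assert (Hz : 0 < x2 / (g + x1) < 1) by (apply Rdiv_in_01; nra).
  assert (Hx2g : x2^2 + x1^2 = g^2) by lra.
  rewrite fa_tan_half, fb_tan_half by lra.
  rewrite (cos_tan_half_angle x3 g d), (cos_tan_half_angle x2 x1 g),
    (sin_tan_half_angle x2 x1 g) by lra.
  replace (g / d * (x1 / g)) with (x1 / d) by (field; lra).
  replace (g / d * (x2 / g)) with (x2 / d) by (field; lra).
  split; [split; assumption | split; apply sqrt_ratio_leg; lra].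
Qed.

Open Scope Z_scope.

Lemma P12_sum_of_squares a b c u : P12 a b c u =
  ((c^2 - a^2) * (c^2 + b^2) * (c^2 + u^2))^2
  + ((c^2 - b^2) * (c^2 + a^2) * (c^2 + u^2))^2
  - ((c^2 - u^2) * (c^2 + a^2) * (c^2 + b^2))^2.
Proof. unfold P12; ring. Qed.

Lemma P12_eq_0_of_half_angles A B C U a b g d : d <> 0 -> a*a + b*b = g*g ->
  d * (C^2 - A^2) = a * (C^2 + A^2) ->
  d * (C^2 - B^2) = b * (C^2 + B^2) ->
  d * (C^2 - U^2) = g * (C^2 + U^2) ->
  P12 A B C U = 0.
Proof.
  intros Hd Habg HA HB HU; rewrite P12_sum_of_squares.
  set (K := (C^2 + A^2) * (C^2 + B^2) * (C^2 + U^2)).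
  assert (E : d^2 * (((C^2 - A^2) * (C^2 + B^2) * (C^2 + U^2))^2
                     + ((C^2 - B^2) * (C^2 + A^2) * (C^2 + U^2))^2
                     - ((C^2 - U^2) * (C^2 + A^2) * (C^2 + B^2))^2)
              = K^2 * (a*a + b*b - g*g)).
  { transitivity ((d * (C^2 - A^2) * (C^2 + B^2) * (C^2 + U^2))^2
                  + (d * (C^2 - B^2) * (C^2 + A^2) * (C^2 + U^2))^2
                  - (d * (C^2 - U^2) * (C^2 + A^2) * (C^2 + B^2))^2); [ring|].
    rewrite HA, HB, HU; unfold K; ring. }
  rewrite Habg, Z.sub_diag, Z.mul_0_r in E.
  apply Z.mul_eq_0 in E as [E | E]; [|exact E].
  apply Z.pow_eq_0 in E; [contradiction | lia].
Qed.

(* If [q^2 + p^2 = t^2], the angle with cosine [p / t] has half-angle tangent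
   [q / (t + p) = (t - p) / q]; the conclusion says [(x^2 - y^2) / (x^2 + y^2)],
   the cosine of the angle with half-angle tangent [y / x], is [p / t]. *)
Lemma half_angle_cos_minus k q p t x y : q*q + p*p = t*t ->
  x = k * q -> y = k * (t - p) -> t * (x^2 - y^2) = p * (x^2 + y^2).
Proof.
  intros Hqpt -> ->.
  enough (t * ((k*q)^2 - (k*(t-p))^2) - p * ((k*q)^2 + (k*(t-p))^2)
          = k^2 * (t - p) * (q*q + p*p - t*t)) by (rewrite Hqpt, Z.sub_diag in *; lia).
  ring.
Qed.

Lemma half_angle_cos_plus k q p t x y : q*q + p*p = t*t ->
  x = k * (t + p) -> y = k * q -> t * (x^2 - y^2) = p * (x^2 + y^2).
Proof.
  intros Hqpt -> ->.
  enough (t * ((k*(t+p))^2 - (k*q)^2) - p * ((k*(t+p))^2 + (k*q)^2)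
          = k^2 * (t + p) * (t*t - p*p - q*q)) by (rewrite <- Hqpt in *; lia).
  ring.
Qed.

Lemma P12_root_of_cuboid a b c al be g d : perfect_euler_cuboid a b c al be g d ->
  P12 ((d - a) * be * (d + g)) ((d - b) * al * (d + g)) (al * be * (d + g)) (c * al * be) = 0.
Proof.
  intros (_ & _ & _ & _ & _ & _ & Hd & Hab & Hbc & Hca & Habc).
  apply (P12_eq_0_of_half_angles _ _ _ _ a b g d); [lia | exact Hab | ..].
  - apply (half_angle_cos_minus (be * (d + g)) al a d); [lia | ring | ring].
  - apply (half_angle_cos_minus (al * (d + g)) be b d); [lia | ring | ring].
  - apply (half_angle_cos_plus (al * be) c g d); [lia | ring | ring].
Qed.

Lemma perfect_euler_cuboid_of_diagonals x1 x2 x3 al be g d :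
  0 < x1 -> 0 < x2 -> 0 < x3 -> 0 < al -> 0 < be -> 0 < g -> 0 < d ->
  x1^2 + x2^2 = g^2 -> g^2 + x3^2 = d^2 ->
  x1^2 + al^2 = d^2 -> x2^2 + be^2 = d^2 ->
  perfect_euler_cuboid x1 x2 x3 al be g d.
Proof. intros; unfold perfect_euler_cuboid; rewrite !Z.pow_2_r in *; repeat split; lia. Qed.

Lemma cuboid_of_P12_root a b c u : 0 < a < c -> 0 < b < c -> 0 < u < c ->
  P12 a b c u = 0 -> perfect_euler_cuboid_exists.
Proof.
  intros Ha Hb Hu.
  assert (Pa : 0 < c^2 - a^2) by nia. assert (Pb : 0 < c^2 - b^2) by nia.
  assert (Pu : 0 < c^2 - u^2) by nia.
  assert (Qa : 0 < c^2 + a^2) by nia. assert (Qb : 0 < c^2 + b^2) by nia.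
  assert (Qu : 0 < c^2 + u^2) by nia.
  rewrite P12_sum_of_squares; intros HP%Zminus_eq.
  exists ((c^2 - a^2) * (c^2 + b^2) * (c^2 + u^2)),
    ((c^2 - b^2) * (c^2 + a^2) * (c^2 + u^2)),
    (2 * u * c * (c^2 + a^2) * (c^2 + b^2)),
    (2 * a * c * (c^2 + b^2) * (c^2 + u^2)),
    (2 * b * c * (c^2 + a^2) * (c^2 + u^2)),
    ((c^2 - u^2) * (c^2 + a^2) * (c^2 + b^2)),
    ((c^2 + a^2) * (c^2 + b^2) * (c^2 + u^2)).
  apply perfect_euler_cuboid_of_diagonals; [.. | exact HP | ring | ring | ring];
    clear HP; repeat apply Z.mul_pos_pos; lia.
Qed.

Open Scope R_scope.

Lemma IZR_sq_sum x y z : (x*x + y*y = z*z)%Z -> IZR x ^ 2 + IZR y ^ 2 = IZR z ^ 2.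
Proof. intros H%(f_equal IZR); rewrite plus_IZR, !mult_IZR in H; lra. Qed.

Lemma cuboid_point_in_Dab a b c al be g d : perfect_euler_cuboid a b c al be g d ->
  0 < IZR (c * al * be) / IZR (al * be * (d + g)) < 1 /\
  in_Dab (IZR ((d - a) * be * (d + g)) / IZR (al * be * (d + g)))
         (IZR ((d - b) * al * (d + g)) / IZR (al * be * (d + g))).
Proof.
  intros (Pa & Pb & Pc & Pal & Pbe & Pg & Pd & Hab & Hbc & Hca & Habc).
  assert (Hg := IZR_sq_sum a b g Hab).
  assert (Hd := IZR_sq_sum c g d ltac:(lia)).
  assert (Hal := IZR_sq_sum al a d ltac:(lia)).
  assert (Hbe := IZR_sq_sum be b d ltac:(lia)).
  apply (IZR_lt 0) in Pa, Pb, Pc, Pal, Pbe, Pg, Pd.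
  destruct (cuboid_tan_half_angles (IZR a) (IZR b) (IZR c) (IZR g) (IZR d) (IZR al) (IZR be))
    as [Huz [Ha Hb]]; try lra.
  rewrite !mult_IZR, !plus_IZR, !minus_IZR; split.
  - replace (IZR c * IZR al * IZR be / (IZR al * IZR be * (IZR d + IZR g)))
      with (IZR c / (IZR d + IZR g)) by (field; lra).
    apply Huz.
  - exists (IZR c / (IZR d + IZR g)), (IZR b / (IZR g + IZR a)).
    rewrite Ha, Hb; split; [exact Huz | split; field; lra].
Qed.

Lemma IZR_div_in_01 a c : (0 < c)%Z -> 0 < IZR a / IZR c < 1 -> (0 < a < c)%Z.
Proof.
  intros Hc%(IZR_lt 0) Hac.
  assert (E : IZR a = IZR a / IZR c * IZR c) by (field; lra).
  split; apply lt_IZR; rewrite E; nra.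
Qed.

Theorem theorem5p3 :
  perfect_euler_cuboid_exists <->
  exists a b c u : Z,
    (0 < c)%Z /\
    0 < IZR u / IZR c < 1 /\
    in_Dab (IZR a / IZR c) (IZR b / IZR c) /\
    P12 a b c u = 0%Z.
Proof.
  split.
  - intros (a & b & c & al & be & g & d & Hcub).
    exists ((d - a) * be * (d + g))%Z, ((d - b) * al * (d + g))%Z,
      (al * be * (d + g))%Z, (c * al * be)%Z.
    destruct (cuboid_point_in_Dab _ _ _ _ _ _ _ Hcub) as [Hu HD].
    pose proof (P12_root_of_cuboid _ _ _ _ _ _ _ Hcub) as HP.
    destruct Hcub as (_ & _ & _ & Pal & Pbe & Pg & Pd & _).
    repeat split; [nia | apply Hu | apply Hu | exact HD | exact HP].
  - intros (a & b & c & u & Hc & Hu & (v & z & Hvz & Ha & Hb) & HP).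
    apply (cuboid_of_P12_root a b c u); try apply IZR_div_in_01; auto.
    + rewrite Ha; now apply fa_in_01.
    + rewrite Hb; now apply fb_in_01.
Qed.
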